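(* Let $\Gamma$ be an imprimitive geodesic-transitive graph. If $\Gamma$ is bipartite, then each halved graph of $\Gamma$ is geodesic-transitive. If $\Gamma$ is antipodal, then its folded graph is geodesic-transitive.
   Context: All graphs are finite, simple, undirected, connected. A geodesic of length $\ell$ is a vertex sequence $(v_0,\dots,v_\ell)$ with consecutive vertices adjacent and $d(v_0,v_\ell)=\ell$; a graph is geodesic-transitive if its automorphism group is transitive on geodesics of each length. For a graph of diameter $d$, the distance-$i$ graph $\Gamma^{(i)}$ joins vertices at distance $i$ in $\Gamma$; $\Gamma$ is imprimitive if some $\Gamma^{(i)}$, $1\le i\le d$, is disconnected. For a connected bipartite graph of diameter $\ge2$, a halved graph is the graph induced by $\Gamma^{(2)}$ on one of the two parts. A graph of diameter $d\ge2$ is antipodal if $\Gamma^{(d)}$ is a disjoint union of cliques (i.e. being equal or at distance $d$ is an equivalence relation); its folded graph has these equivalence classes as vertices, two classes being adjacent iff some vertex of one is adjacent in $\Gamma$ to some vertex of the other. *)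

(* Finite simple graphs given by a vertex set V : {set T}
   (T a finType) and an adjacency relation e : rel T, taken on V. *)
From mathcomp Require Import all_boot.
Set Implicit Arguments. Unset Strict Implicit. Unset Printing Implicit Defensive.

Section Graphs.
Variable T : finType.
Implicit Types (V A B : {set T}) (e : rel T).

Definition simple_graph e := symmetric e /\ irreflexive e.

Fixpoint ball V e (k : nat) (x : T) : {set T} :=
  if k is k'.+1 then
    ball V e k' x :|: [set y in V | [exists z in ball V e k' x, e z y]]
  else [set x].

(* distance in the graph (V, e); equals #|T|.+1 if y is unreachable *)
Definition dist V e (x y : T) : nat :=
  find (fun k => y \in ball V e k x) (iota 0 #|T|.+1).

Definition connected_graph V e :=
  V != set0 /\ {in V &, forall x y, y \in ball V e #|T| x}.

Definition diameter V e : nat := \max_(x in V) \max_(y in V) dist V e x y.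

Definition distance_graph V e (i : nat) : rel T := fun x y => dist V e x y == i.

Definition geodesic V e (l : nat) (p : seq T) : Prop :=
  if p is v0 :: s then
    [/\ size s = l, all (fun v => v \in V) p, path e v0 s &
        dist V e v0 (last v0 s) = l]
  else False.

Definition automorphism V e (g : T -> T) :=
  [/\ {in V, forall x, g x \in V}, {in V &, injective g} &
      {in V &, forall x y, e (g x) (g y) = e x y}].

Definition geodesic_transitive V e :=
  forall (l : nat) (p q : seq T), geodesic V e l p -> geodesic V e l q ->
    exists g, automorphism V e g /\ map g p = q.

Definition imprimitive V e :=
  exists i, 1 <= i <= diameter V e /\ ~ connected_graph V (distance_graph V e i).

Definition bipartition V e A B :=
  [/\ A :|: B = V, [disjoint A & B] &
      {in V &, forall x y, e x y -> (x \in A) = (y \in B)}].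

(* halved graph on the part A: induced by Gamma^(2) on A *)
Definition halved_adj V e : rel T := distance_graph V e 2.

Definition antipodal_rel V e : rel T :=
  fun x y => (x == y) || (dist V e x y == diameter V e).

Definition antipodal V e :=
  2 <= diameter V e /\
  {in V & &, forall x y z, antipodal_rel V e x y -> antipodal_rel V e y z ->
                             antipodal_rel V e x z}.

Definition antipodal_class V e (x : T) : {set T} := [set y in V | antipodal_rel V e x y].

Definition folded_vertices V e : {set {set T}} := [set antipodal_class V e x | x in V].

Definition folded_adj (e : rel T) : rel {set T} :=
  fun C D => [exists x in C, exists y in D, e x y].
End Graphs.

From mathcomp Require Import all_boot zify.
Set Implicit Arguments. Unset Strict Implicit. Unset Printing Implicit Defensive.

(* A geodesic of a halved graph lifts to a geodesic of twice its length in the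
   bipartite graph: insert a common neighbour between consecutive vertices, and
   note that halved distances are at most half of the distances in the graph.
   An automorphism mapping one lift onto another preserves each part of the
   (connected) bipartition and all distances, so it restricts to an automorphism
   of the halved graph mapping the first geodesic onto the second.
   In an antipodal graph of diameter d, geodesic transitivity makes every
   (d-1)-geodesic extend to a d-geodesic; hence if a ~ b and x is antipodal to a,
   then x has a neighbour antipodal to b. Walks of the folded graph therefore
   lift to walks of the same length, and as folding does not increase distances,
   geodesics lift to geodesics; an automorphism between two lifts then permutes
   the antipodal classes as required. *)

Lemma all_last (T : Type) (P : pred T) x s : all P s -> P x -> P (last x s).
Proof. by elim: s x => //= y s IHs x /andP[Py sP] _; apply: IHs. Qed.

Section Balls.
Variables (T : finType) (V : {set T}) (e : rel T).

Lemma in_ball0 x y : (y \in ball V e 0 x) = (y == x).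
Proof. by rewrite inE. Qed.

Lemma in_ballS k x y : (y \in ball V e k.+1 x) =
  (y \in ball V e k x) || (y \in V) && [exists z in ball V e k x, e z y].
Proof. by rewrite /= !inE. Qed.

Lemma subset_ball k m x : k <= m -> ball V e k x \subset ball V e m x.
Proof.
elim: m => [|m IHm]; first by rewrite leqn0 => /eqP->.
rewrite leq_eqVlt => /orP[/eqP->//|/IHm sub_km].
exact: subset_trans sub_km (subsetUl _ _).
Qed.

Lemma ball_sub k x : x \in V -> ball V e k x \subset V.
Proof.
move=> xV; elim: k => [|k IHk]; first by rewrite sub1set.
by apply/subsetP => y; rewrite in_ballS => /orP[/(subsetP IHk)|/andP[]].
Qed.

Lemma ball_adj k x z y :
  z \in ball V e k x -> y \in V -> e z y -> y \in ball V e k.+1 x.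
Proof.
by move=> zk yV ezy; rewrite in_ballS yV; apply/orP; right; apply/existsP; exists z; rewrite zk.
Qed.

Lemma ball_trans a b x z y :
  z \in ball V e a x -> y \in ball V e b z -> y \in ball V e (a + b) x.
Proof.
move=> za; elim: b y => [|b IHb] y; first by rewrite in_ball0 addn0 => /eqP->.
rewrite in_ballS addnS => /orP[/IHb|/andP[yV /existsP[w /andP[/IHb wb ewy]]]].
  exact/subsetP/subset_ball.
exact: ball_adj wb yV ewy.
Qed.

Lemma path_ball x s : path e x s -> all (fun v => v \in V) s ->
  last x s \in ball V e (size s) x.
Proof.
elim/last_ind: s => [|s y IHs]; first by rewrite in_ball0.
rewrite rcons_path all_rcons last_rcons size_rcons => /andP[es ey] /andP[yV sV].
exact: ball_adj (IHs es sV) yV ey.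
Qed.

Lemma ball_path k x y : y \in ball V e k x -> exists s,
  [/\ size s <= k, path e x s, all (fun v => v \in V) s & last x s = y].
Proof.
elim: k y => [|k IHk] y; first by rewrite in_ball0 => /eqP->; exists [::].
rewrite in_ballS => /orP[/IHk[s [? ? ? ?]]|/andP[yV /existsP[z /andP[/IHk]]]].
  by exists s; split => //; apply: leqW.
move=> [s [? es sV <-]] ezy; exists (rcons s y).
by rewrite size_rcons rcons_path all_rcons last_rcons es sV ezy yV.
Qed.

Lemma dist_leq k x y : y \in ball V e k x -> k <= #|T| -> dist V e x y <= k.
Proof.
move=> yk kT; rewrite /dist; case: leqP => // lt_k.
have := before_find 0 lt_k; rewrite nth_iota ?add0n ?yk //; lia.
Qed.

Lemma dist_ball x y : dist V e x y <= #|T| -> y \in ball V e (dist V e x y) x.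
Proof.
rewrite /dist => dT.
have reach : has (fun k => y \in ball V e k x) (iota 0 #|T|.+1).
  by rewrite has_find size_iota ltnS.
by have := nth_find 0 reach; rewrite nth_iota // -(size_iota 0 #|T|.+1) -has_find.
Qed.

Lemma dist_path_leq x s : path e x s -> all (fun v => v \in V) s ->
  size s <= #|T| -> dist V e x (last x s) <= size s.
Proof. by move=> es sV; apply: dist_leq; apply: path_ball. Qed.

Lemma dist_leq_diameter x y : x \in V -> y \in V -> dist V e x y <= diameter V e.
Proof.
move=> xV yV; rewrite /diameter.
apply: leq_trans (@leq_bigmax_cond _ (mem V) (dist V e x) y yV) _.
exact: (@leq_bigmax_cond _ (mem V) (fun x => \max_(y in V) dist V e x y) x xV).
Qed.

End Balls.

Section Automorphisms.
Variables (T : finType) (V : {set T}) (e : rel T) (g : T -> T).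
Hypothesis g_auto : automorphism V e g.

Lemma automorphism_onto z : z \in V -> exists2 y, y \in V & g y = z.
Proof.
case: g_auto => gV g_inj _ zV.
have gV_eq : g @: V = V.
  apply/eqP; rewrite eqEcard card_in_imset // leqnn andbT.
  by apply/subsetP => _ /imsetP[y yV ->]; apply: gV.
by move: zV; rewrite -{1}gV_eq => /imsetP[y yV ->]; exists y.
Qed.

Lemma automorphism_ball k x y : x \in V -> y \in V ->
  (g y \in ball V e k (g x)) = (y \in ball V e k x).
Proof.
case: (g_auto) => gV g_inj g_adj xV.
elim: k y => [|k IHk] y yV; first by rewrite !in_ball0 (inj_in_eq g_inj).
rewrite !in_ballS IHk // gV // yV; congr (_ || _).
apply/existsP/existsP => -[z /andP[zk ezy]].
  have [z' z'V gz'] := automorphism_onto (subsetP (ball_sub _ _ (gV _ xV)) _ zk).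
  by exists z'; rewrite -IHk // gz' zk -g_adj // gz'.
have zV := subsetP (ball_sub _ _ xV) _ zk.
by exists (g z); rewrite IHk // zk g_adj.
Qed.

Lemma automorphism_dist x y : x \in V -> y \in V ->
  dist V e (g x) (g y) = dist V e x y.
Proof. by move=> xV yV; apply: eq_find => k; apply: automorphism_ball. Qed.

Lemma folded_adj_imset (C D : {set T}) : C \subset V -> D \subset V ->
  folded_adj e (g @: C) (g @: D) = folded_adj e C D.
Proof.
case: g_auto => _ _ g_adj /subsetP CV /subsetP DV; apply/existsP/existsP.
  move=> [_ /andP[/imsetP[x xC ->] /existsP[_ /andP[/imsetP[y yD ->] exy]]]].
  exists x; rewrite xC /=; apply/existsP; exists y.
  by rewrite yD -g_adj ?(CV x xC) ?(DV y yD).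
move=> [x /andP[xC /existsP[y /andP[yD exy]]]].
exists (g x); rewrite imset_f //=; apply/existsP; exists (g y).
by rewrite imset_f //= g_adj ?(CV x xC) ?(DV y yD).
Qed.

End Automorphisms.

Section Connected.
Variables (T : finType) (V : {set T}) (e : rel T).
Hypothesis conV : connected_graph V e.

Lemma dist_leq_card x y : x \in V -> y \in V -> dist V e x y <= #|T|.
Proof. by move=> xV yV; apply: dist_leq => //; apply: conV.2. Qed.

Lemma mem_ballE k x y : x \in V -> y \in V ->
  (y \in ball V e k x) = (dist V e x y <= k).
Proof.
move=> xV yV; have dT := dist_leq_card xV yV.
apply/idP/idP => [yk|dk]; last exact: subsetP (subset_ball _ _ _ dk) _ (dist_ball dT).
by case: (leqP k #|T|) => [|/ltnW]; [apply: dist_leq | apply: leq_trans].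
Qed.

Lemma dist_triangle x y z : x \in V -> y \in V -> z \in V ->
  dist V e x z <= dist V e x y + dist V e y z.
Proof.
move=> xV yV zV; rewrite -mem_ballE //.
by apply: (ball_trans (z := y)); apply: dist_ball; apply: dist_leq_card.
Qed.

Lemma dist_eq0 x y : x \in V -> y \in V -> (dist V e x y == 0) = (x == y).
Proof. by move=> xV yV; rewrite -leqn0 -mem_ballE // in_ball0 eq_sym. Qed.

Lemma dist_adj_leq1 x y : x \in V -> y \in V -> e x y -> dist V e x y <= 1.
Proof.
by move=> xV yV exy; rewrite -mem_ballE //; apply: (ball_adj _ yV exy); rewrite in_ball0.
Qed.

Lemma dist_last_leq x s : x \in V -> path e x s -> all (fun v => v \in V) s ->
  dist V e x (last x s) <= size s.
Proof. by move=> xV es sV; rewrite -mem_ballE ?path_ball //; apply: all_last. Qed.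

Lemma diameter_attained : exists x y,
  [/\ x \in V, y \in V & dist V e x y = diameter V e].
Proof.
have V_gt0 : 0 < #|V| by rewrite card_gt0; apply: conV.1.
rewrite /diameter.
have [x xV ->] := eq_bigmax_cond (fun x => \max_(y in V) dist V e x y) V_gt0.
by have [y yV ->] := eq_bigmax_cond (fun y => dist V e x y) V_gt0; exists x, y.
Qed.

Lemma shortest_geodesic x y : x \in V -> y \in V ->
  exists s, geodesic V e (dist V e x y) (x :: s) /\ last x s = y.
Proof.
move=> xV yV; have [s [s_le es sV sy]] := ball_path (dist_ball (dist_leq_card xV yV)).
have s_ge : dist V e x y <= size s by rewrite -sy dist_last_leq.
have s_eq : size s = dist V e x y by apply/eqP; rewrite eqn_leq s_le.
by exists s; rewrite /= xV sV sy.
Qed.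

Lemma geodesic_rcons l x s y :
  geodesic V e l.+1 (x :: rcons s y) -> geodesic V e l (x :: s).
Proof.
rewrite /= size_rcons rcons_path all_rcons last_rcons.
move=> [[s_eq] /andP[xV /andP[yV sV]] /andP[es ezy] dxy]; rewrite xV sV es.
have zV := all_last sV xV.
have := dist_triangle xV zV yV; have := dist_adj_leq1 zV yV ezy.
by have := dist_last_leq xV es sV; split=> //; lia.
Qed.

Lemma geodesic_extension l p x s : geodesic_transitive V e ->
  geodesic V e l.+1 p -> geodesic V e l (x :: s) ->
  exists y, [/\ y \in V, e (last x s) y & dist V e x y = l.+1].
Proof.
case: p => [|u t] gtV //; case/lastP: t => [[]//|t z] Gp Gs.
have [g [g_auto /= [gu gt]]] := gtV _ _ _ (geodesic_rcons Gp) Gs.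
case: (g_auto) Gp => gV _ g_adj [_ /=].
rewrite all_rcons rcons_path last_rcons => /and3P[uV zV tV] /andP[_ ez] duz.
exists (g z); rewrite gV // -gu -gt last_map g_adj ?(all_last tV uV) //.
by rewrite automorphism_dist.
Qed.

Hypothesis e_sym : symmetric e.

Lemma ball_sym k x y : x \in V -> y \in V ->
  y \in ball V e k x -> x \in ball V e k y.
Proof.
move=> xV yV; elim: k y yV => [|k IHk] y yV; first by rewrite !in_ball0 eq_sym.
rewrite in_ballS => /orP[/(IHk _ yV)|/andP[_ /existsP[z /andP[zk ezy]]]].
  exact/subsetP/subset_ball.
have zV := subsetP (ball_sub _ _ xV) _ zk.
rewrite -add1n; apply: (ball_trans (z := z)) (IHk _ zV zk).
by apply: (ball_adj _ zV); rewrite ?in_ball0 // e_sym.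
Qed.

Lemma dist_sym x y : x \in V -> y \in V -> dist V e x y = dist V e y x.
Proof.
have le_dist u v : u \in V -> v \in V -> dist V e v u <= dist V e u v.
  move=> uV vV; rewrite -mem_ballE //.
  by apply: ball_sym => //; apply: dist_ball; apply: dist_leq_card.
by move=> xV yV; apply/eqP; rewrite eqn_leq !le_dist.
Qed.

End Connected.

Section Interleave.
Variable T : Type.

Fixpoint interleave (ws us : seq T) : seq T :=
  match ws, us with
  | w :: ws', u :: us' => w :: u :: interleave ws' us'
  | _, _ => [::]
  end.

Lemma size_interleave ws us : size ws = size us ->
  size (interleave ws us) = (size us).*2.
Proof. by elim: us ws => [|u us IHus] [|w ws] //= [/IHus ->]. Qed.

Lemma last_interleave x ws us : size ws = size us ->
  last x (interleave ws us) = last x us.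
Proof. by elim: us ws x => [|u us IHus] [|w ws] x //= [/IHus ->]. Qed.

Lemma all_interleave (P : pred T) ws us :
  all P ws -> all P us -> all P (interleave ws us).
Proof.
by elim: us ws => [|u us IHus] [|w ws] //= /andP[-> Pws] /andP[-> Pus]; apply: IHus.
Qed.

Lemma interleave_inj ws us ws' us' : size ws = size us -> size ws' = size us' ->
  interleave ws us = interleave ws' us' -> us = us'.
Proof.
elim: us ws ws' us' => [|u us IHus] [|w ws] [|w' ws'] [|u' us'] //=.
by move=> [/IHus eq_us] [/eq_us {}eq_us] [_ -> /eq_us ->].
Qed.

End Interleave.

Lemma map_interleave (T U : Type) (f : T -> U) ws us :
  map f (interleave ws us) = interleave (map f ws) (map f us).
Proof. by elim: us ws => [|u us IHus] [|w ws] //=; rewrite IHus. Qed.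

Lemma bipartition_sym (T : finType) (V A B : {set T}) (e : rel T) :
  symmetric e -> bipartition V e A B -> bipartition V e B A.
Proof.
move=> e_sym [VAB disAB adjAB]; split; rewrite 1?setUC 1?disjoint_sym //.
by move=> x y xV yV exy; rewrite (adjAB y x) // e_sym.
Qed.

Section Bipartite.
Variables (T : finType) (V A B : {set T}) (e : rel T).
Hypothesis bipAB : bipartition V e A B.
Local Notation HA := (halved_adj V e).

Lemma bipartition_subl x : x \in A -> x \in V.
Proof. by case: bipAB => <- _ _ xA; rewrite inE xA. Qed.

Lemma bipartition_adj x y : x \in V -> y \in V -> e x y -> (y \in A) = (x \notin A).
Proof.
case: bipAB => VAB disAB adjAB xV yV exy; rewrite (adjAB x y) //.
have : y \in A :|: B by rewrite VAB.
rewrite inE => /orP[yA|yB]; first by rewrite yA (disjointFr disAB yA).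
by rewrite yB (disjointFl disAB yB).
Qed.

Hypothesis conV : connected_graph V e.

Lemma halved_adj_midpoint u v : u \in V -> v \in V -> HA u v ->
  exists2 w, w \in V & e u w && e w v.
Proof.
move=> uV vV /eqP duv.
have : v \in ball V e 2 u by rewrite mem_ballE // duv.
rewrite in_ballS mem_ballE // duv => /orP[//|/andP[_ /existsP[w /andP[]]]].
rewrite in_ballS in_ball0 => /orP[/eqP->|/andP[wV /existsP[u' /andP[]]]].
  by move=> euv; have := dist_adj_leq1 conV uV vV euv; rewrite duv.
by rewrite in_ball0 => /eqP-> euw ewv; exists w; rewrite ?euw.
Qed.

Lemma halved_adj_common_neighbour w z y : w \in A -> y \in A -> w != y ->
  z \in V -> e w z -> e z y -> HA w y.
Proof.
move=> wA yA wy zV ewz ezy.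
have [wV yV] := (bipartition_subl wA, bipartition_subl yA).
have dwy_le2 : dist V e w y <= 2.
  rewrite -mem_ballE //; apply: (ball_adj _ yV ezy).
  by apply: (ball_adj _ zV ewz); rewrite in_ball0.
have dwy_ne0 : dist V e w y != 0 by rewrite dist_eq0.
have dwy_gt1 : ~~ (dist V e w y <= 1).
  rewrite -mem_ballE // in_ballS in_ball0 eq_sym (negbTE wy) yV /=.
  apply/negP => /existsP[x /andP[/set1P-> ewy]].
  by move: (bipartition_adj wV yV ewy); rewrite wA yA.
by apply/eqP; lia.
Qed.

Lemma halved_ball k x y : x \in A -> y \in ball V e k x ->
  (y \in A -> y \in ball A HA k./2 x) /\
  (y \notin A -> exists2 z, z \in ball A HA k.-1./2 x & e z y).
Proof.
move=> xA; have xV := bipartition_subl xA.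
have ball_leq m n z : z \in ball A HA m x -> m <= n -> z \in ball A HA n x.
  by move=> zm /(subset_ball A HA x)/subsetP; apply.
elim: k y => [|k IHk] y.
  by rewrite in_ball0 => /eqP->; rewrite xA; split=> // _; rewrite /= inE.
rewrite in_ballS => /orP[/IHk[yA_ball yB_ball]|/andP[yV /existsP[z /andP[zk ezy]]]].
  split=> [/yA_ball yk|/yB_ball[z zk ezy]]; first by apply: ball_leq yk _; apply/half_leq.
  by exists z => //; apply: ball_leq zk _; apply/half_leq/leq_pred.
have zV := subsetP (ball_sub _ _ xV) _ zk.
have [zA_ball zB_ball] := IHk z zk; have yA_zB := bipartition_adj zV yV ezy.
split=> [yA|]; last by rewrite yA_zB negbK => /zA_ball zk2; exists z.
have zB : z \notin A by rewrite -yA_zB.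
have k_gt0 : 0 < k.
  by case: k zk {IHk zA_ball zB_ball} => // /[!in_ball0] /eqP zx; rewrite zx xA in zB.
have [w wk ewz] := zB_ball zB; have wA := subsetP (ball_sub _ _ xA) _ wk.
have [<-|wy] := eqVneq w y.
  by apply: ball_leq wk _; apply/half_leq/(leq_trans (leq_pred k)).
apply: ball_leq (ball_adj wk yA (halved_adj_common_neighbour wA yA wy zV ewz ezy)) _.
by case: (k) k_gt0.
Qed.

Lemma dist_halved_leq x y : x \in A -> y \in A -> (dist A HA x y).*2 <= dist V e x y.
Proof.
move=> xA yA; have dT := dist_leq_card conV (bipartition_subl xA) (bipartition_subl yA).
have [/(_ yA) y_ball _] := halved_ball xA (dist_ball dT).
by rewrite -geq_half_double; apply: dist_leq y_ball _; lia.
Qed.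

Lemma automorphism_part_stable g u : automorphism V e g -> u \in A -> g u \in A ->
  {in V, forall y, (g y \in A) = (y \in A)}.
Proof.
move=> [gV _ g_adj] uA guA y yV; have uV := bipartition_subl uA.
elim: #|T| y yV (conV.2 _ _ uV yV) => [|k IHk] y yV.
  by rewrite in_ball0 => /eqP->; rewrite uA guA.
rewrite in_ballS => /orP[/IHk->//|/andP[_ /existsP[z /andP[zk ezy]]]].
have zV := subsetP (ball_sub _ _ uV) _ zk.
by rewrite (bipartition_adj (gV _ zV) (gV _ yV)) ?g_adj // (bipartition_adj zV yV ezy) IHk.
Qed.

Lemma halved_path_lift x s : x \in A -> all (fun v => v \in A) s -> path HA x s ->
  exists ws, [/\ size ws = size s, path e x (interleave ws s) & all (fun v => v \in V) ws].
Proof.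
elim: s x => [|y s IHs] x xA /=; first by exists [::].
move=> /andP[yA sA] /andP[Hxy Hs]; have [ws [ws_eq ews wsV]] := IHs y yA sA Hs.
have [w wV /andP[exw ewy]] :=
  halved_adj_midpoint (bipartition_subl xA) (bipartition_subl yA) Hxy.
by exists (w :: ws); rewrite /= ws_eq exw ewy ews wV.
Qed.

Lemma halved_geodesic_lift l x s : geodesic A HA l (x :: s) ->
  exists ws, size ws = size s /\ geodesic V e l.*2 (x :: interleave ws s).
Proof.
move=> [s_eq /= /andP[xA sA] Hs dxs]; have xV := bipartition_subl xA.
have [ws [ws_eq ews wsV]] := halved_path_lift xA sA Hs.
have wssV := all_interleave wsV (sub_all bipartition_subl sA).
exists ws; split=> //; rewrite /= xV wssV ews size_interleave // s_eq; split=> //.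
apply/eqP; rewrite eqn_leq; apply/andP; split.
  by have := dist_last_leq conV xV ews wssV; rewrite size_interleave // s_eq.
by rewrite last_interleave // -dxs dist_halved_leq // (all_last sA xA).
Qed.

Lemma halved_geodesic_transitive : geodesic_transitive V e -> geodesic_transitive A HA.
Proof.
move=> gtV l [|x s] [|x' s'] // Gs Gs'.
have [ws [ws_eq Gws]] := halved_geodesic_lift Gs.
have [ws' [ws'_eq Gws']] := halved_geodesic_lift Gs'.
have [g [g_auto /= [gx]]] := gtV _ _ _ Gws Gws'.
rewrite map_interleave => /interleave_inj gs.
have {}gs : map g s = s' by apply: gs; rewrite ?size_map.
exists g; split; last by rewrite /= gx gs.
have xA : x \in A by case: Gs => _ /andP[].
have x'A : x' \in A by case: Gs' => _ /andP[].
case: (g_auto) => _ g_inj _; split.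
- move=> y yA; rewrite (automorphism_part_stable g_auto xA) ?gx //; exact: bipartition_subl.
- by apply: sub_in2 g_inj => y /bipartition_subl.
- move=> y z /bipartition_subl yV /bipartition_subl zV.
  by rewrite /halved_adj /distance_graph automorphism_dist.
Qed.

End Bipartite.

Section Antipodal.
Variables (T : finType) (V : {set T}) (e : rel T).
Hypotheses (e_sym : symmetric e) (e_irr : irreflexive e).
Hypotheses (conV : connected_graph V e) (antiV : antipodal V e).
Local Notation ar := (antipodal_rel V e).
Local Notation cls := (antipodal_class V e).

Lemma antipodal_rel_refl x : ar x x.
Proof. by rewrite /antipodal_rel eqxx. Qed.

Lemma antipodal_rel_sym x y : x \in V -> y \in V -> ar x y = ar y x.
Proof. by move=> xV yV; rewrite /antipodal_rel eq_sym dist_sym. Qed.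

Lemma antipodal_rel_trans x y z : x \in V -> y \in V -> z \in V ->
  ar x y -> ar y z -> ar x z.
Proof. exact: antiV.2. Qed.

Lemma mem_antipodal_class x y : (y \in cls x) = (y \in V) && ar x y.
Proof. by rewrite inE. Qed.

Lemma antipodal_class_id x : x \in V -> x \in cls x.
Proof. by move=> xV; rewrite mem_antipodal_class xV antipodal_rel_refl. Qed.

Lemma antipodal_class_sub x : cls x \subset V.
Proof. by apply/subsetP => y; rewrite mem_antipodal_class => /andP[]. Qed.

Lemma antipodal_class_eq x y : x \in V -> y \in V -> ar x y -> cls x = cls y.
Proof.
move=> xV yV axy; apply/setP => z; rewrite !mem_antipodal_class.
have [zV|] //= := boolP (z \in V); apply/idP/idP; last exact: antipodal_rel_trans.
by apply: antipodal_rel_trans; rewrite // antipodal_rel_sym.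
Qed.

Lemma adj_not_antipodal x y : x \in V -> y \in V -> e x y -> ~~ ar x y.
Proof.
move=> xV yV exy; rewrite negb_or; apply/andP; split.
  by apply: contraTneq exy => ->; rewrite e_irr.
have := dist_adj_leq1 conV xV yV exy; have := antiV.1; lia.
Qed.

Lemma dist_adj_antipode a b x : a \in V -> b \in V -> x \in V -> e a b ->
  dist V e a x = diameter V e -> dist V e b x = (diameter V e).-1.
Proof.
move=> aV bV xV eab dax.
have dbx_ne : dist V e b x != diameter V e.
  apply: contra (adj_not_antipodal bV aV _) => [dbx|]; last by rewrite e_sym.
  apply: (antipodal_rel_trans (y := x)) => //; first by rewrite /antipodal_rel dbx orbT.
  by rewrite antipodal_rel_sym // /antipodal_rel dax eqxx orbT.
have := dist_triangle conV aV bV xV; have := dist_adj_leq1 conV aV bV eab.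
have := dist_leq_diameter e bV xV; lia.
Qed.

Local Notation F := (folded_vertices V e).
Local Notation Fe := (folded_adj e).

Lemma path_antipodal_class x t : x \in V -> path e x t -> all (fun v => v \in V) t ->
  path Fe (cls x) (map cls t).
Proof.
elim: t x => [|y t IHt] x xV //= /andP[exy et] /andP[yV tV].
rewrite IHt // andbT; apply/existsP; exists x; rewrite antipodal_class_id //=.
by apply/existsP; exists y; rewrite antipodal_class_id.
Qed.

Lemma dist_folded_leq x y : x \in V -> y \in V ->
  dist F Fe (cls x) (cls y) <= dist V e x y.
Proof.
move=> xV yV; have [t [[t_eq /= /andP[_ tV] et _] ty]] := shortest_geodesic conV xV yV.
rewrite -t_eq -ty -(last_map cls) -(size_map cls).
apply: dist_path_leq (path_antipodal_class xV et tV) _ _.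
  by rewrite all_map; apply/allP => v /(allP tV) vV; apply: imset_f.
(* [dist] only searches walks up to the cardinality of the vertex type. *)
rewrite size_map t_eq; apply: leq_trans (dist_leq_card conV xV yV) _.
exact: leq_card (@set1_inj T).
Qed.

Section AntipodalAutomorphism.
Variable g : T -> T.
Hypothesis g_auto : automorphism V e g.

Lemma automorphism_antipodal_rel x y : x \in V -> y \in V -> ar (g x) (g y) = ar x y.
Proof.
case: (g_auto) => _ g_inj _ xV yV.
by rewrite /antipodal_rel (inj_in_eq g_inj) // automorphism_dist.
Qed.

Lemma automorphism_antipodal_class x : x \in V -> g @: cls x = cls (g x).
Proof.
case: (g_auto) => gV _ _ xV; apply/setP => z; apply/imsetP/idP.
  move=> [y]; rewrite mem_antipodal_class => /andP[yV axy] ->.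
  by rewrite mem_antipodal_class gV // automorphism_antipodal_rel.
rewrite mem_antipodal_class => /andP[zV axz].
have [y yV gy] := automorphism_onto g_auto zV.
by exists y; rewrite // mem_antipodal_class yV -automorphism_antipodal_rel // gy.
Qed.

Lemma automorphism_folded : automorphism F Fe (fun C : {set T} => g @: C).
Proof.
case: (g_auto) => gV _ _; split.
- by move=> _ /imsetP[x xV ->]; rewrite automorphism_antipodal_class // imset_f ?gV.
- move=> _ _ /imsetP[x xV ->] /imsetP[y yV ->].
  rewrite !automorphism_antipodal_class // => gxy; apply: antipodal_class_eq => //.
  rewrite -automorphism_antipodal_rel //.
  by have := antipodal_class_id (gV _ yV); rewrite -gxy mem_antipodal_class => /andP[].
- move=> _ _ /imsetP[x xV ->] /imsetP[y yV ->].
  by rewrite (folded_adj_imset g_auto) ?antipodal_class_sub.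
Qed.

End AntipodalAutomorphism.

Hypothesis gtV : geodesic_transitive V e.

Lemma antipodal_adj_lift a b x : a \in V -> b \in V -> x \in V -> e a b -> ar a x ->
  exists y, [/\ y \in V, e x y & ar b y].
Proof.
move=> aV bV xV eab /orP[/eqP<-|/eqP dax].
  by exists b; rewrite bV eab antipodal_rel_refl.
have [s [Gs <-]] := shortest_geodesic conV bV xV.
rewrite (dist_adj_antipode aV bV xV eab dax) in Gs.
have [u [v [uV vV duv]]] := diameter_attained conV.
have [t [Gt _]] := shortest_geodesic conV uV vV.
have d_gt0 : 0 < diameter V e by have := antiV.1; lia.
rewrite duv -(prednK d_gt0) in Gt.
have [y [yV ey dby]] := geodesic_extension conV gtV Gt Gs.
by exists y; rewrite /antipodal_rel yV ey dby prednK ?eqxx ?orbT.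
Qed.

Lemma folded_path_lift x s : x \in V -> all (fun C => C \in F) s -> path Fe (cls x) s ->
  exists t, [/\ size t = size s, path e x t, all (fun v => v \in V) t & map cls t = s].
Proof.
elim: s x => [|C s IHs] x xV /=; first by exists [::].
move=> /andP[/imsetP[c cV ->] sF] /andP[/existsP[a /andP[ax /existsP[b /andP[bc eab]]]] Hs].
move: ax bc; rewrite !mem_antipodal_class => /andP[aV xa] /andP[bV cb].
have [y [yV exy b_y]] :=
  antipodal_adj_lift aV bV xV eab (etrans (antipodal_rel_sym aV xV) xa).
have cls_y : cls y = cls c.
  by apply/esym/antipodal_class_eq => //; apply: antipodal_rel_trans cb b_y.
rewrite -cls_y in Hs *; have [t [t_eq et tV cls_t]] := IHs y yV sF Hs.
by exists (y :: t); rewrite /= t_eq exy et yV tV cls_t.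
Qed.

Lemma folded_geodesic_lift l x s : x \in V -> geodesic F Fe l (cls x :: s) ->
  exists t, geodesic V e l (x :: t) /\ map cls t = s.
Proof.
move=> xV [s_eq /= /andP[_ sF] Hs dxs].
have [t [t_eq et tV cls_t]] := folded_path_lift xV sF Hs.
exists t; split=> //; rewrite /= xV tV et t_eq s_eq; split=> //.
apply/eqP; rewrite eqn_leq; apply/andP; split; first by rewrite -s_eq -t_eq dist_last_leq.
by rewrite -dxs -cls_t last_map dist_folded_leq ?(all_last tV xV).
Qed.

Lemma folded_geodesic_transitive : geodesic_transitive F Fe.
Proof.
move=> l [|C s] [|C' s'] // Gs Gs'.
have [x xV eC] : exists2 x, x \in V & C = cls x by case: Gs => _ /andP[/imsetP].
have [x' x'V eC'] : exists2 x', x' \in V & C' = cls x' by case: Gs' => _ /andP[/imsetP].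
subst C C'.
have [t [Gt <-]] := folded_geodesic_lift xV Gs.
have [t' [Gt' <-]] := folded_geodesic_lift x'V Gs'.
have [g [g_auto gt]] := gtV Gt Gt'.
exists (fun C : {set T} => g @: C); split; first exact: automorphism_folded.
change (map (fun C : {set T} => g @: C) (map cls (x :: t)) = map cls (x' :: t')).
rewrite -gt -!map_comp.
apply/eq_in_map => v vt /=; apply: automorphism_antipodal_class => //.
by case: Gt => _ /allP/(_ v vt).
Qed.

End Antipodal.

Theorem lemma3p2 (T : finType) (V : {set T}) (e : rel T) :
  simple_graph e -> connected_graph V e ->
  geodesic_transitive V e -> imprimitive V e ->
  (forall A B : {set T}, bipartition V e A B ->
     geodesic_transitive A (halved_adj V e) /\
     geodesic_transitive B (halved_adj V e)) /\
  (antipodal V e ->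
     geodesic_transitive (folded_vertices V e) (folded_adj e)).
Proof.
move=> [e_sym e_irr] conV gtV _; split=> [A B bipAB|antiV].
  split; first exact: halved_geodesic_transitive bipAB conV gtV.
  exact: halved_geodesic_transitive (bipartition_sym e_sym bipAB) conV gtV.
exact: folded_geodesic_transitive.
Qed.
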